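(* Let $X$ be an Alexandroff space, $Y$ a topological space, and $f:X\to Y$ an arbitrary map. The following are equivalent: (i) $f$ has closed graph; (ii) for every connected component $C$ of $X$, $f(C)$ is a singleton closed subset of $Y$; (iii) for every $x\in X$, $f([x]_{\Re_X})$ is a singleton closed subset of $Y$. Moreover, if these hold then $f$ is continuous.
   Context: For a map $f:X\to Y$ its graph is $G_f=\{(x,f(x)):x\in X\}$; $f$ has closed graph if $G_f$ is closed in $X\times Y$ (product topology). A topological space $X$ is an Alexandroff space if the intersection of every nonempty family of open subsets of $X$ is open; equivalently, every point $a\in X$ has a smallest open neighbourhood, denoted $V_a$. On an Alexandroff space $X$ define the relation $\Re_X$ by: $(x,y)\in\Re_X$ iff there exist $x=x_1,x_2,\ldots,x_n=y$ in $X$ with $V_{x_i}\cap V_{x_{i+1}}\neq\emptyset$ for all $i\in\{1,\ldots,n-1\}$. This is an equivalence relation, and $[x]_{\Re_X}=\{y\in X:(x,y)\in\Re_X\}$ denotes the equivalence class of $x$. *)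

From HB Require Import structures.
From mathcomp Require Import all_boot all_order all_algebra.
From mathcomp Require Import all_classical all_reals all_analysis.
From Stdlib Require Import Relations.
Set Implicit Arguments. Unset Strict Implicit. Unset Printing Implicit Defensive.
Local Open Scope classical_set_scope.

Definition graph_of {X Y : Type} (f : X -> Y) : set (X * Y) :=
  [set p | p.2 = f p.1].

Definition closed_graph {X Y : topologicalType} (f : X -> Y) : Prop :=
  closed (graph_of f).

Definition alexandroff (X : topologicalType) : Prop :=
  forall F : set (set X), F !=set0 -> (forall U, F U -> open U) ->
    open (\bigcap_(U in F) U).

(* V_a : the intersection of all open neighbourhoods of a (the smallest open
   neighbourhood of a when X is Alexandroff). *)
Definition minnbhd {X : topologicalType} (a : X) : set X :=
  \bigcap_(U in [set U : set X | open U /\ U a]) U.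

Definition minnbhd_meet {X : topologicalType} (x y : X) : Prop :=
  minnbhd x `&` minnbhd y !=set0.

(* Re_X: x ~ y iff there is a finite chain x = x_1, ..., x_n = y with
   consecutive smallest neighbourhoods meeting (reflexive-transitive closure). *)
Definition ReX {X : topologicalType} (x y : X) : Prop :=
  clos_refl_trans X minnbhd_meet x y.

Definition ReX_class {X : topologicalType} (x : X) : set X := [set y | ReX x y].

(* In an Alexandroff space every point x has an open, connected smallest
   neighbourhood V_x, so the classes of Re_X are clopen and connected: they are
   exactly the connected components. A closed graph forces f to be constant on
   each V_x (a point of V_x lies in every neighbourhood of x) and makes every
   value f x a closed point; conversely, if f is constant on the clopen class
   [x] with closed value f x, then the box [x] * (Y \ {f x}) separates any point off the
   graph from it. Constancy on the open sets V_x also gives continuity. *)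

From HB Require Import structures.
From mathcomp Require Import all_boot all_order all_algebra.
From mathcomp Require Import all_classical all_reals all_analysis.
From Stdlib Require Import Relations.
Set Implicit Arguments. Unset Strict Implicit.
Local Open Scope classical_set_scope.

Section SmallestNeighbourhood.
Variable X : topologicalType.

Lemma minnbhd_refl (x : X) : minnbhd x x.
Proof. by move=> U []. Qed.

Lemma minnbhd_sub (x : X) (U : set X) : open U -> U x -> minnbhd x `<=` U.
Proof. by move=> oU Ux y; apply. Qed.

Lemma minnbhd_nbhs_sub (x : X) (P : set X) : nbhs x P -> minnbhd x `<=` P.
Proof. by rewrite nbhsE => -[U [oU Ux] UP] y /(minnbhd_sub oU Ux) /UP. Qed.

Lemma minnbhd_closed (x y : X) (D : set X) :
  minnbhd x y -> closed D -> D y -> D x.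
Proof.
move=> Vxy cD Dy; apply: contrapT => nDx.
exact: (minnbhd_sub (closed_openC cD) nDx Vxy).
Qed.

Lemma minnbhd_connected (x : X) : connected (minnbhd x).
Proof.
move=> B [b Bb] [C oC BC] [D cD BD].
have Bx : B x.
  have [Vb Db] : (minnbhd x `&` D) b by rewrite -BD.
  by rewrite BD; split; [exact: minnbhd_refl | exact: minnbhd_closed Vb cD Db].
have [_ Cx] : (minnbhd x `&` C) x by rewrite -BC.
rewrite BC; apply/seteqP; split=> [y [] //|y Vy].
by split=> //; exact: (minnbhd_sub oC Cx Vy).
Qed.

Lemma minnbhd_sub_connected_component (x : X) :
  minnbhd x `<=` connected_component setT x.
Proof.
by apply: connected_component_max; [exact: minnbhd_refl | | exact: minnbhd_connected].
Qed.

Lemma ReX_connected_component (x y : X) :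
  ReX x y -> connected_component setT x y.
Proof.
elim=> [u v [z [Vuz Vvz]]|u|u v w _ Cuv _ Cvw].
- apply: connected_component_trans (minnbhd_sub_connected_component Vuz) _.
  exact/connected_component_sym/minnbhd_sub_connected_component.
- exact: connected_component_refl.
- exact: connected_component_trans Cuv Cvw.
Qed.

Lemma ReX_refl (x : X) : ReX x x.
Proof. exact: rt_refl. Qed.

Lemma ReX_trans (x y z : X) : ReX x y -> ReX y z -> ReX x z.
Proof. exact: rt_trans. Qed.

Lemma ReX_sym (x y : X) : ReX x y -> ReX y x.
Proof.
elim=> [u v [z [Vuz Vvz]]|u|u v w _ Rvu _ Rwv].
- by apply: rt_step; exists z.
- exact: ReX_refl.
- exact: ReX_trans Rwv Rvu.
Qed.

Lemma ReX_minnbhd (x y : X) : minnbhd x y -> ReX x y.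
Proof. by move=> Vxy; apply: rt_step; exists y; split=> //; exact: minnbhd_refl. Qed.

Hypothesis alexX : alexandroff X.

Lemma open_minnbhd (x : X) : open (minnbhd x).
Proof.
apply: alexX => [|U [] //].
by exists setT; split=> //; exact: openT.
Qed.

Lemma nbhs_minnbhd (x : X) : nbhs x (minnbhd x).
Proof. by apply: open_nbhs_nbhs; split; [exact: open_minnbhd | exact: minnbhd_refl]. Qed.

Lemma nbhs_ReX_class (x y : X) : ReX x y -> nbhs y (ReX_class x).
Proof.
move=> Rxy; apply: filterS (nbhs_minnbhd y) => z Vyz.
exact: ReX_trans Rxy (ReX_minnbhd Vyz).
Qed.

Lemma open_ReX_class (x : X) : open (ReX_class x).
Proof. by rewrite openE => y /nbhs_ReX_class. Qed.

Lemma closed_ReX_class (x : X) : closed (ReX_class x).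
Proof.
rewrite -[ReX_class x]setCK; apply: open_closedC.
rewrite openE => y nRxy; apply: filterS (nbhs_minnbhd y) => z Vyz Rxz.
exact: nRxy (ReX_trans Rxz (ReX_sym (ReX_minnbhd Vyz))).
Qed.

(* A clopen set containing x contains the whole component of x. *)
Lemma connected_component_ReX_class (x : X) :
  connected_component setT x = ReX_class x.
Proof.
apply/seteqP; split=> [|y]; last exact: ReX_connected_component.
rewrite -(@component_connected _ setT x (connected_component setT x `&` ReX_class x)).
- by move=> y [].
- by exists x; split; [exact: connected_component_refl | exact: ReX_refl].
- by exists (ReX_class x) => //; exact: open_ReX_class.
- by exists (ReX_class x) => //; exact: closed_ReX_class.
Qed.

End SmallestNeighbourhood.

Arguments ReX_refl {X} x.

Section ClosedGraph.
Variables (X Y : topologicalType) (f : X -> Y).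

Definition closed_point_image (A : set X) : Prop :=
  exists y : Y, f @` A = [set y] /\ closed [set y].

Lemma closed_point_imageP (A : set X) (x : X) : A x ->
  closed_point_image A <-> (forall a, A a -> f a = f x) /\ closed [set f x].
Proof.
move=> Ax; split=> [[y [fA cy]]|[fAx cfx]].
  have fxy : f x = y by rewrite -[_ = _]/([set y] (f x)) -fA; exists x.
  split; last by rewrite fxy.
  by move=> a Aa; rewrite fxy -[_ = _]/([set y] (f a)) -fA; exists a.
exists (f x); split=> //; apply/seteqP; split=> [_ [a Aa <-]|_ ->].
  exact: fAx.
by exists x.
Qed.

Hypothesis cgf : closed_graph f.

Lemma closed_graph_minnbhd_const (x y : X) : minnbhd x y -> f x = f y.
Proof.
move=> Vxy; apply: esym; apply: (@cgf (x, f y)) => B [[P Q] /= [nP nQ] PQB].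
by exists (y, f y); split=> //; apply: PQB; split;
  [exact: minnbhd_nbhs_sub nP _ Vxy | exact: nbhs_singleton nQ].
Qed.

Lemma closed_graph_ReX_const (x y : X) : ReX x y -> f x = f y.
Proof.
elim=> [u v [z [Vuz Vvz]]|//|u v w _ -> _ -> //].
by rewrite (closed_graph_minnbhd_const Vuz) (closed_graph_minnbhd_const Vvz).
Qed.

Lemma closed_graph_closed_point (x : X) : closed [set f x].
Proof.
move=> w cw; apply: (@cgf (x, w)) => B [[P Q] /= [nP nQ] PQB].
exists (x, f x); split=> //; apply: PQB; split; first exact: nbhs_singleton nP.
by have [_ [-> Qy]] := cw Q nQ.
Qed.

End ClosedGraph.

Section ConstantOnClasses.
Variables (X Y : topologicalType) (f : X -> Y).
Hypothesis alexX : alexandroff X.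

Lemma ReX_const_closed_graph :
  (forall x y, ReX x y -> f y = f x) -> (forall x, closed [set f x]) ->
  closed_graph f.
Proof.
move=> fR cf [x w] cw; apply: contrapT => /= nw.
have nB : nbhs (x, w) (ReX_class x `*` ~` [set f x]).
  exists (ReX_class x, ~` [set f x]) => //; split=> /=.
    exact: nbhs_ReX_class (ReX_refl x).
  by apply: open_nbhs_nbhs; split; [exact: closed_openC | ].
have [[a b] [/= Eb [/= Rxa]]] := cw _ nB.
by apply; rewrite /graph_of /= in Eb; rewrite Eb (fR _ _ Rxa).
Qed.

Lemma minnbhd_const_continuous :
  (forall x y, minnbhd x y -> f x = f y) -> continuous f.
Proof.
move=> fV x Q nQ; apply: filterS (nbhs_minnbhd alexX x) => a Vxa.
by rewrite /= -(fV _ _ Vxa); exact: nbhs_singleton nQ.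
Qed.

End ConstantOnClasses.

Theorem theorem3p5 (X Y : topologicalType) (f : X -> Y) :
  alexandroff X ->
  (closed_graph f <->
     (forall x : X, exists y : Y,
        f @` connected_component [set: X] x = [set y] /\ closed [set y])) /\
  ((forall x : X, exists y : Y,
        f @` connected_component [set: X] x = [set y] /\ closed [set y]) <->
   (forall x : X, exists y : Y,
        f @` ReX_class x = [set y] /\ closed [set y])) /\
  (closed_graph f -> continuous f).
Proof.
move=> alexX.
have iff23 : (forall x, closed_point_image f (connected_component setT x)) <->
             (forall x, closed_point_image f (ReX_class x)).
  by split=> H x; move: (H x); rewrite connected_component_ReX_class.
have iff13 : closed_graph f <-> forall x, closed_point_image f (ReX_class x).
  split=> [cgf x | H3].
    apply/(closed_point_imageP f (ReX_refl x)); split.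
      by move=> a /(closed_graph_ReX_const cgf).
    exact: closed_graph_closed_point.
  have /all_and2[fR cf] x := (closed_point_imageP f (ReX_refl x)).1 (H3 x).
  exact: ReX_const_closed_graph.
split; [by rewrite iff13 iff23 | split; first exact: iff23].
move=> cgf; apply: minnbhd_const_continuous => // x y.
exact: closed_graph_minnbhd_const.
Qed.
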